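(* Let $N\ge3$, let $f_1,\dots,f_N$ be coordinates with Poisson brackets $\{f_m,f_n\}=-\delta_{m+1,n}+\delta_{m-1,n}$ (indices mod $N$), and let $\beta_1,\dots,\beta_{N-2}$ be constants. For $m=1,\dots,N-2$ let $F_m(\lambda)=\prod_{n=m}^{N-2}\bigl(1+(\lambda+\beta_n)\frac{\partial^2}{\partial f_n\partial f_{n+1}}\bigr)(f_m\cdots f_{N-1})$ and $F_{N-1}(\lambda)=f_{N-1}$. Then for each $n=0,1,\dots,N-3$ and independent parameters $\lambda,\mu$, $$\{F_{n+1}(\lambda),F_{n+1}(\mu)\}=\{F_{n+2}(\lambda),F_{n+2}(\mu)\}=0,\qquad \{F_{n+1}(\lambda),F_{n+2}(\mu)\}=\frac{F_{n+2}(\lambda)F_{n+1}(\mu)-F_{n+1}(\lambda)F_{n+2}(\mu)}{\lambda-\mu}.$$ In particular $B(\lambda)=F_1(\lambda)$ and $\tilde A(\lambda)=F_2(\lambda)$ satisfy $\{\tilde A(\lambda),\tilde A(\mu)\}=\{B(\lambda),B(\mu)\}=0$ and $\{\tilde A(\lambda),B(\mu)\}=\frac{B(\lambda)\tilde A(\mu)-\tilde A(\lambda)B(\mu)}{\lambda-\mu}$.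
   Context: Brackets of polynomials in $\lambda$ are computed coefficientwise. When $N$ is even the $f_n$ may additionally be constrained by $f_1+f_3+\cdots+f_{N-1}=f_2+f_4+\cdots+f_N$; the function $v=(f_1+\cdots+f_N)/2$ is a Casimir of this bracket. *)

From HB Require Import structures.
From mathcomp Require Import all_boot all_order all_algebra.
From mathcomp Require Import mpoly.
Set Implicit Arguments. Unset Strict Implicit. Unset Printing Implicit Defensive.
Import GRing.Theory.
Local Open Scope ring_scope.

(* Polynomial ring in N+2 variables over R:
   variable 'X_(k-1) (k = 1..N) is the coordinate f_k,
   variable 'X_N is the parameter lambda, 'X_(N+1) is the parameter mu. *)

Definition lamv (N : nat) : 'I_N.+2 := inord N.
Definition muv (N : nat) : 'I_N.+2 := inord N.+1.
Arguments lamv N : clear implicits.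
Arguments muv N : clear implicits.

Section Defs.
Variable R : fieldType.
Variable N : nat.

Definition fv (k : nat) : {mpoly R[N.+2]} := 'X_(inord k.-1).
Definition dv (k : nat) (p : {mpoly R[N.+2]}) : {mpoly R[N.+2]} :=
  mderiv (inord k.-1) p.


Definition pbc (m k : nat) : R :=
  (((m %% N == k.+1 %% N)%N)%:R - ((k %% N == m.+1 %% N)%N)%:R).

(* Poisson bracket of polynomials (coefficientwise in lambda, mu) *)
Definition pbr (P Q : {mpoly R[N.+2]}) : {mpoly R[N.+2]} :=
  \sum_(1 <= m < N.+1) \sum_(1 <= k < N.+1)
     (pbc m k)%:MP * (dv m P * dv k Q).

Definition Dop (beta : nat -> R) (l : 'I_N.+2) (k : nat) (p : {mpoly R[N.+2]})
  : {mpoly R[N.+2]} :=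
  p + ('X_l + (beta k)%:MP) * dv k (dv k.+1 p).

Definition F (beta : nat -> R) (m : nat) (l : 'I_N.+2) : {mpoly R[N.+2]} :=
  if m == N.-1 then fv N.-1
  else foldr (Dop beta l) (\prod_(m <= k < N) fv k) (iota m (N.-1 - m)).

End Defs.

From Pilot Require Import Defs.
From mathcomp Require Import all_boot all_order all_algebra.
From mathcomp Require Import mpoly.
From mathcomp Require Import ring zify.
Set Implicit Arguments. Unset Strict Implicit. Unset Printing Implicit Defensive.
Import GRing.Theory.
Local Open Scope ring_scope.

(* Expanding the first operator shows that the F_m obey the three-term
   recurrence F_m(l) = f_m F_(m+1)(l) + (l + beta_m) F_(m+2)(l), started from
   F_(N-1) = f_(N-1) and F_N = 1, and that F_(m+1), F_(m+2) only involve
   f_(m+1), ..., f_(N-1).  Hence {f_m, F_(m+1)} = -F_(m+2) and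
   {f_m, F_(m+2)} = 0, and a Leibniz-rule computation transports the three
   relations from the pair (F_(m+1), F_(m+2)) to the pair (F_m, F_(m+1)).
   Downward induction on m from the pair (f_(N-1), 1) gives the theorem. *)

Lemma mderivXU (R : ringType) n (i j : 'I_n) :
  mderiv i ('X_j : {mpoly R[n]}) = (i == j)%:R.
Proof.
rewrite mderivX mnm1E; case: eqP => [->|ne].
  have ->: (U_(i) - U_(i) = 0)%MM by apply/mnmP => k; rewrite mnmBE mnm0E subnn.
  by rewrite mpolyX0 scale1r eqxx.
by rewrite eq_sym; case: eqP => // _; rewrite scale0r.
Qed.

Lemma mpolyX_sub_neq0 (R : nzRingType) n (i j : 'I_n) :
  i != j -> ('X_i - 'X_j : {mpoly R[n]}) != 0.
Proof.
move=> ne; apply/eqP => /(congr1 (mcoeff U_(i))).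
by rewrite mcoeffB !mcoeffXU eqxx eq_sym (negbTE ne) subr0 mcoeff0 => /eqP; rewrite oner_eq0.
Qed.

Lemma nat_down_ind (Q : nat -> Prop) t :
  Q t -> (forall m, (1 <= m < t)%N -> Q m.+1 -> Q m) ->
  forall m, (1 <= m <= t)%N -> Q m.
Proof.
move=> Qt QS m hm; have [d hd] : exists d, (m + d = t)%N by exists (t - m)%N; lia.
elim: d m hm hd => [|d IHd] m hm hd; first by rewrite addn0 in hd; rewrite hd.
by apply: QS; [lia | apply: IHd; lia].
Qed.

Section Bracket.
Variables (R : fieldType) (N : nat).
Local Notation P := {mpoly R[N.+2]}.
Local Notation f := (fv R N).

Lemma dv_fv j k : (1 <= j <= N)%N -> (1 <= k <= N)%N -> dv j (f k) = (j == k)%:R.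
Proof.
move=> hj hk; rewrite /dv /fv mderivXU.
rewrite -(inj_eq val_inj) /= !inordK; try lia.
by congr (_%:R); apply/eqP/eqP; lia.
Qed.

Lemma dv_fv_eq k : (1 <= k <= N)%N -> dv k (f k) = 1.
Proof. by move=> hk; rewrite dv_fv ?eqxx. Qed.

Lemma dv_fv_neq j k : (1 <= j <= N)%N -> (1 <= k <= N)%N -> j != k -> dv j (f k) = 0.
Proof. by move=> hj hk /negbTE ne; rewrite dv_fv ?ne. Qed.

Lemma dv_param j (l : 'I_N.+2) : (1 <= j <= N)%N -> (N <= l)%N -> dv j ('X_l : P) = 0.
Proof.
move=> hj hl; rewrite /dv mderivXU.
by case: eqP => // /(congr1 val); rewrite /= inordK; lia.
Qed.

Lemma dvD k (p q : P) : dv k (p + q) = dv k p + dv k q.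
Proof. exact: mderivD. Qed.

Lemma dvM k (p q : P) : dv k (p * q) = dv k p * q + p * dv k q.
Proof. exact: mderivM. Qed.

Lemma dv1 k : dv k (1 : P) = 0.
Proof. by rewrite /dv -mpolyC1 mderivC. Qed.

Definition coord_const (p : P) := forall k, (1 <= k <= N)%N -> dv k p = 0.

Lemma coord_const1 : coord_const 1.
Proof. by move=> k _; rewrite dv1. Qed.

Lemma coord_const_param (l : 'I_N.+2) (a : R) : (N <= l)%N -> coord_const ('X_l + a%:MP).
Proof. by move=> hl k hk; rewrite dvD dv_param // /dv mderivC addr0. Qed.

Lemma dv_coord_constMl k (c p : P) : coord_const c -> (1 <= k <= N)%N ->
  dv k (c * p) = c * dv k p.
Proof. by move=> hc hk; rewrite dvM hc // mul0r add0r. Qed.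

Lemma pbc_anti m k : pbc R N k m = - pbc R N m k.
Proof. by rewrite /pbc opprB. Qed.

Lemma pbc_succ m : (1 <= m)%N -> (m.+2 <= N)%N -> pbc R N m m.+1 = -1.
Proof.
move=> hm hmN; rewrite /pbc eqxx.
suff /eqP/negbTE -> : (m %% N)%N <> (m.+2 %% N)%N by rewrite sub0r.
have [hlt|hge] := ltnP m.+2 N; first by rewrite !modn_small; lia.
by rewrite (_ : m.+2 = N) ?modnn ?modn_small; lia.
Qed.

Lemma pbc_far m k : (1 <= m)%N -> (m.+2 <= k < N)%N -> pbc R N m k = 0.
Proof.
move=> hm hk; rewrite /pbc (@modn_small m) ?(@modn_small k) ?(@modn_small m.+1); try lia.
rewrite (_ : (k == m.+1) = false); last by apply/negbTE/eqP; lia.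
have [hlt|hge] := ltnP k.+1 N.
  by rewrite modn_small // (_ : (m == k.+1) = false) ?subrr //; apply/negbTE/eqP; lia.
rewrite (_ : k.+1 = N) ?modnn; last by lia.
by rewrite (_ : (m == 0) = false) ?subrr //; apply/negbTE/eqP; lia.
Qed.

Lemma pbrDl (p q r : P) : pbr (p + q) r = pbr p r + pbr q r.
Proof.
rewrite /pbr -big_split; apply: eq_bigr => m _; rewrite -big_split.
by apply: eq_bigr => k _; rewrite dvD /=; ring.
Qed.

Lemma pbrDr (p q r : P) : pbr r (p + q) = pbr r p + pbr r q.
Proof.
rewrite /pbr -big_split; apply: eq_bigr => m _; rewrite -big_split.
by apply: eq_bigr => k _; rewrite dvD /=; ring.
Qed.

Lemma pbrMl (p q r : P) : pbr (p * q) r = q * pbr p r + p * pbr q r.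
Proof.
rewrite /pbr !mulr_sumr -big_split; apply: eq_bigr => m _.
by rewrite !mulr_sumr -big_split; apply: eq_bigr => k _; rewrite dvM /=; ring.
Qed.

Lemma pbrMr (p q r : P) : pbr r (p * q) = q * pbr r p + p * pbr r q.
Proof.
rewrite /pbr !mulr_sumr -big_split; apply: eq_bigr => m _.
by rewrite !mulr_sumr -big_split; apply: eq_bigr => k _; rewrite dvM /=; ring.
Qed.

Lemma pbr_anti (p q : P) : pbr p q = - pbr q p.
Proof.
rewrite /pbr exchange_big -sumrN; apply: eq_bigr => m _.
by rewrite -sumrN; apply: eq_bigr => k _; rewrite pbc_anti rmorphN /=; ring.
Qed.

Lemma pbr_coord_constl (c q : P) : coord_const c -> pbr c q = 0.
Proof.
move=> hc; rewrite /pbr big_nat big1 // => m hm.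
by rewrite big1 // => k _; rewrite hc ?mul0r ?mulr0 //; lia.
Qed.

Lemma pbr_coord_constr (c q : P) : coord_const c -> pbr q c = 0.
Proof. by move=> hc; rewrite pbr_anti pbr_coord_constl ?oppr0. Qed.

Lemma pbr_fvl m (q : P) : (1 <= m <= N)%N ->
  pbr (f m) q = \sum_(1 <= k < N.+1) (pbc R N m k)%:MP * dv k q.
Proof.
move=> hm; rewrite /pbr exchange_big; apply: eq_bigr => k _.
rewrite (bigD1_seq m) ?mem_index_iota ?iota_uniq //=.
rewrite dv_fv ?eqxx ?mul1r // big_nat_cond big1 ?addr0 // => j /andP[hj ne].
by rewrite dv_fv ?(negbTE ne) ?mul0r ?mulr0 //; lia.
Qed.

Lemma pbr_fv_fv m : (1 <= m <= N)%N -> pbr (f m) (f m) = 0.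
Proof.
move=> hm; rewrite pbr_fvl // big_nat big1 // => k hk.
by rewrite dv_fv //; case: eqP => [->|_]; rewrite ?mulr0 // /pbc subrr mul0r.
Qed.

(* The hypothesis on f_N is needed for m = 1: indices are taken mod N, so the
   left neighbour of f_1 is f_N. *)
Lemma pbr_fv_shift m (q : P) : (1 <= m)%N -> (m.+2 <= N)%N ->
  (forall k, (1 <= k < m)%N -> dv k q = 0) -> dv N q = 0 ->
  pbr (f m) q = - dv m.+1 q.
Proof.
move=> hm hmN hq hqN; rewrite pbr_fvl; last by lia.
rewrite (bigD1_seq m.+1) ?mem_index_iota ?iota_uniq //=; last by lia.
rewrite pbc_succ // rmorphN rmorph1 mulN1r big_nat_cond big1 ?addr0 // => k.
move=> /andP[hk ne]; have [hkm|hkm] := ltnP k m; first by rewrite hq ?mulr0 //; lia.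
have [->|neN] := eqVneq k N; first by rewrite hqN mulr0.
have [->|nem] := eqVneq k m; first by rewrite /pbc subrr mul0r.
by rewrite pbc_far ?mul0r //; lia.
Qed.

End Bracket.

Section TransferRecurrence.
Variables (R : fieldType) (N : nat) (beta : nat -> R) (l : 'I_N.+2).
Hypotheses (N_gt0 : (0 < N)%N) (param_l : (N <= l)%N).
Local Notation P := {mpoly R[N.+2]}.
Local Notation f := (fv R N).
Local Notation D := (Dop beta l).
Local Notation F m := (F beta m l).

Lemma dv_Dop j k (p : P) : (1 <= j <= N)%N -> dv j (D k p) = D k (dv j p).
Proof.
move=> hj; have c_const := coord_const_param (beta k) param_l.
rewrite /Dop dvD dv_coord_constMl //; congr (_ + _ * _).
by rewrite /dv mderiv_comm; congr mderiv; apply: mderiv_comm.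
Qed.

Lemma dv_foldr_Dop j s (p : P) : (1 <= j <= N)%N ->
  dv j (foldr D p s) = foldr D (dv j p) s.
Proof. by move=> hj; elim: s => //= k s IHs; rewrite dv_Dop // IHs. Qed.

Lemma Dop_id k (p : P) : dv k p = 0 -> D k p = p.
Proof.
move=> hp; rewrite /Dop (_ : dv k (dv k.+1 p) = 0) ?mulr0 ?addr0 //.
by rewrite /dv mderiv_comm -[mderiv _ p]/(dv k p) hp mderiv0.
Qed.

Lemma Dop_mull k (p q : P) : dv k p = 0 -> dv k.+1 p = 0 -> D k (p * q) = p * D k q.
Proof. by move=> hk hk1; rewrite /Dop dvM hk1 mul0r add0r dvM hk mul0r add0r; ring. Qed.

Lemma foldr_Dop_mull s (p q : P) : {in s, forall k, dv k p = 0 /\ dv k.+1 p = 0} ->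
  foldr D (p * q) s = p * foldr D q s.
Proof.
elim: s => //= k s IHs hs; have [hk hk1] := hs k (mem_head k s).
by rewrite IHs ?Dop_mull // => j js; apply: hs; rewrite inE js orbT.
Qed.

Lemma F_foldr m : F m = foldr D (\prod_(m <= k < N) f k) (iota m (N.-1 - m)).
Proof.
rewrite /Defs.F; case: eqP => // ->; rewrite subnn /= big_ltn; last by lia.
by rewrite big_geq ?mulr1 //; lia.
Qed.

(* Outside the range of the paper, [F N] is the empty product 1: the seed of
   the recurrence below. *)
Lemma F_N : F N = 1.
Proof. by rewrite F_foldr big_geq // (_ : (N.-1 - N)%N = 0%N) //; lia. Qed.

Lemma F_pred_N : F N.-1 = f N.-1.
Proof. by rewrite /Defs.F eqxx. Qed.

Lemma F_Dop_rec m : (1 <= m)%N -> (m.+2 <= N)%N -> F m = D m (f m * F m.+1).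
Proof.
move=> hm hmN; rewrite !F_foldr (_ : (N.-1 - m = (N.-1 - m.+1).+1)%N); last by lia.
rewrite /= big_ltn; last by lia.
rewrite foldr_Dop_mull // => k; rewrite mem_iota => hk.
by split; rewrite dv_fv; try lia; case: eqP => // ?; exfalso; lia.
Qed.

Lemma dv_F_out m k : (1 <= m)%N -> (1 <= k <= N)%N -> (k < m)%N \/ k = N ->
  dv k (F m) = 0.
Proof.
move=> hm hk hkm; rewrite F_foldr dv_foldr_Dop //.
suff -> : dv k (\prod_(m <= j < N) f j) = 0.
  by elim: (iota _ _) => //= j s ->; rewrite Dop_id // /dv mderiv0.
rewrite big_seq; elim/big_rec: _ => [|j p /[!mem_index_iota] hj hp]; first by rewrite dv1.
rewrite dvM hp dv_fv; try lia; rewrite (_ : (k == j) = false) ?mul0r ?mulr0 ?addr0 //.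
by apply/negbTE/eqP; lia.
Qed.

Lemma dv_F_head m : (1 <= m < N)%N -> dv m (F m) = F m.+1.
Proof.
move=> hm; have [hmN|hmN] := ltnP m.+1 N; last first.
  rewrite (_ : m = N.-1) ?F_pred_N ?dv_fv_eq; try lia.
  by rewrite (_ : N.-1.+1 = N) ?F_N //; lia.
rewrite F_Dop_rec ?dv_Dop; try lia.
have F1_free : dv m (F m.+1) = 0 by rewrite dv_F_out //; lia.
by rewrite dvM F1_free mulr0 addr0 dv_fv_eq ?mul1r ?Dop_id //; lia.
Qed.

Lemma F_rec m : (1 <= m)%N -> (m.+2 <= N)%N ->
  F m = f m * F m.+1 + ('X_l + (beta m)%:MP) * F m.+2.
Proof.
move=> hm hmN; rewrite F_Dop_rec // /Dop; congr (_ + _ * _).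
have F2_free : dv m (F m.+2) = 0 by rewrite dv_F_out //; lia.
rewrite dvM dv_fv_neq ?mul0r ?add0r ?dv_F_head; try lia.
by rewrite dvM dv_fv_eq ?F2_free ?mul1r ?mulr0 ?addr0 //; lia.
Qed.

Lemma pbr_fv_F1 m : (1 <= m)%N -> (m.+2 <= N)%N -> pbr (f m) (F m.+1) = - F m.+2.
Proof.
move=> hm hmN; rewrite pbr_fv_shift ?dv_F_head //; try lia.
- by move=> k hk; rewrite dv_F_out //; lia.
- by rewrite dv_F_out //; lia.
Qed.

Lemma pbr_fv_F2 m : (1 <= m)%N -> (m.+2 <= N)%N -> pbr (f m) (F m.+2) = 0.
Proof.
move=> hm hmN; rewrite pbr_fv_shift ?dv_F_out ?oppr0 //; try lia.
by move=> k hk; rewrite dv_F_out //; lia.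
Qed.

End TransferRecurrence.

Section BracketStep.
Variables (R : fieldType) (N : nat).
Local Notation P := {mpoly R[N.+2]}.

(* The relations of the theorem for (A_i, B_i) = (F_m(l_i), F_(m+1)(l_i)),
   with the denominator d = l_1 - l_2 cleared. *)
Definition bracket_rel (d A1 B1 A2 B2 : P) :=
  [/\ pbr A1 A2 = 0, pbr B1 B2 = 0 & d * pbr A1 B2 = B1 * A2 - A1 * B2].

Lemma bracket_rel_step (f c1 c2 A1 B1 A2 B2 : P) :
  coord_const c1 -> coord_const c2 -> c1 - c2 != 0 ->
  pbr f f = 0 -> pbr f A1 = - B1 -> pbr f A2 = - B2 -> pbr f B1 = 0 -> pbr f B2 = 0 ->
  bracket_rel (c1 - c2) A1 B1 A2 B2 -> bracket_rel (c2 - c1) A2 B2 A1 B1 ->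
  bracket_rel (c1 - c2) (f * A1 + c1 * B1) A1 (f * A2 + c2 * B2) A2.
Proof.
move=> c1_const c2_const c12_neq0 ff fA1 fA2 fB1 fB2 [AA BB A1B2] [_ _ A2B1].
have A1f : pbr A1 f = B1 by rewrite pbr_anti fA1 opprK.
have A2f : pbr A2 f = B2 by rewrite pbr_anti fA2 opprK.
have B1f : pbr B1 f = 0 by rewrite pbr_anti fB1 oppr0.
have B1A2 : pbr B1 A2 = - pbr A2 B1 by rewrite pbr_anti.
split=> //.
  apply/(mulfI c12_neq0); rewrite mulr0.
  rewrite !pbrDl !pbrDr !pbrMl !pbrMr !(pbr_coord_constl _ c1_const) !(pbr_coord_constr _ c2_const).
  rewrite ff fA2 fB2 AA BB A1f B1f B1A2.
  transitivity (f * c2 * ((c1 - c2) * pbr A1 B2 - (B1 * A2 - A1 * B2))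
     + c1 * f * ((c2 - c1) * pbr A2 B1 - (B2 * A1 - A2 * B1))); first ring.
  by rewrite A1B2 A2B1 !subrr !mulr0 addr0.
rewrite !pbrDl !pbrMl (pbr_coord_constl _ c1_const) fA2 AA B1A2.
transitivity (- (c1 - c2) * A1 * B2 + c1 * ((c2 - c1) * pbr A2 B1)); first ring.
by rewrite A2B1; ring.
Qed.

End BracketStep.

Lemma bracket_rel_F (R : fieldType) (N : nat) (beta : nat -> R) m : (1 <= m < N)%N ->
  forall l1 l2 : 'I_N.+2, (N <= l1)%N -> (N <= l2)%N -> l1 != l2 ->
  bracket_rel ('X_l1 - 'X_l2)
    (F beta m l1) (F beta m.+1 l1) (F beta m l2) (F beta m.+1 l2).
Proof.
move=> hm; have N_gt1 : (1 < N)%N by lia.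
have N_gt0 : (0 < N)%N by lia.
have {hm} : (1 <= m <= N.-1)%N by lia.
move: m; apply: nat_down_ind => [|m hm IHm] l1 l2 hl1 hl2 ne.
  rewrite (_ : N.-1.+1 = N); last by lia.
  rewrite !F_N // !F_pred_N; split.
  - by apply: pbr_fv_fv; lia.
  - by apply: pbr_coord_constl; apply: coord_const1.
  - by rewrite pbr_coord_constr ?mulr0 ?mul1r ?mulr1 ?subrr //; apply: coord_const1.
have hm1 : (1 <= m)%N by lia.
have hmN : (m.+2 <= N)%N by lia.
pose c (i : 'I_N.+2) : {mpoly R[N.+2]} := 'X_i + (beta m)%:MP.
have X_shift (i j : 'I_N.+2) : 'X_i - 'X_j = c i - c j by rewrite /c; ring.
rewrite (F_rec beta N_gt0 hl1 hm1 hmN) (F_rec beta N_gt0 hl2 hm1 hmN) X_shift.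
apply: bracket_rel_step; rewrite -?X_shift.
- exact: coord_const_param.
- exact: coord_const_param.
- exact: mpolyX_sub_neq0.
- by apply: pbr_fv_fv; lia.
- exact: pbr_fv_F1.
- exact: pbr_fv_F1.
- exact: pbr_fv_F2.
- exact: pbr_fv_F2.
- exact: IHm.
- by apply: IHm; rewrite // eq_sym.
Qed.

Theorem mainTheorem8 (R : fieldType) (N : nat) (beta : nat -> R) :
  (3 <= N)%N ->
  forall n : nat, (n <= N - 3)%N ->
    [/\ pbr (F beta n.+1 (lamv N)) (F beta n.+1 (muv N)) = 0,
        pbr (F beta n.+2 (lamv N)) (F beta n.+2 (muv N)) = 0
      & ('X_(lamv N) - 'X_(muv N)) *
          pbr (F beta n.+1 (lamv N)) (F beta n.+2 (muv N))
        = F beta n.+2 (lamv N) * F beta n.+1 (muv N)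
          - F beta n.+1 (lamv N) * F beta n.+2 (muv N)].
Proof.
move=> hN n hn.
have lam_param : (N <= lamv N)%N by rewrite /lamv inordK.
have mu_param : (N <= muv N)%N by rewrite /muv inordK.
have lam_neq_mu : lamv N != muv N.
  by apply/eqP => /(congr1 val); rewrite /lamv /muv /= !inordK //; lia.
have hm : (1 <= n.+1 < N)%N by lia.
by have [] := bracket_rel_F beta hm lam_param mu_param lam_neq_mu.
Qed.
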